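(* Let $G$ be a Lie group of dimension $n$ with Lie algebra $\mathfrak{g}$, let $D$ be a left-invariant completely nonholonomic distribution on $G$ of rank $m$, $2\le m<n$, with a left-invariant inner product $\langle\cdot,\cdot\rangle$ (defining a left-invariant sub-Riemannian metric $d$), and let $D^{\perp}$ be a left-invariant rigging of $D$ such that $[\mathfrak{g},\mathfrak{g}]\subset D^{\perp}(e)$. Then all Solov'ev curvatures (sectional, Ricci and scalar) of $(D,\langle\cdot,\cdot\rangle)$ with respect to the rigging $D^{\perp}$ are equal to zero.
   Context: A rigging of $D$ is a distribution $D^\perp$ with $D\oplus D^\perp=TG$. Solov'ev curvatures: choose a left-invariant Riemannian metric $(\cdot,\cdot)$ on $G$ with $(\cdot,\cdot)|_D=\langle\cdot,\cdot\rangle$ and $(D,D^{\perp})=0$; let $\nabla$ be its Levi-Civita connection and $H,V$ the projections onto $D,D^{\perp}$. Put $\overline{\nabla}_XY=H\nabla_X(HY)+V\nabla_X(VY)$, with torsion $T(X,Y)=\overline{\nabla}_XY-\overline{\nabla}_YX-[X,Y]$ and curvature $\overline{R}(X,Y)=\overline{\nabla}_X\overline{\nabla}_Y-\overline{\nabla}_Y\overline{\nabla}_X-\overline{\nabla}_{[X,Y]}$. The curvature tensor $K$ of $D$ is given for $X,Y,Z,W$ tangent to $D$ by $(K(X,Y)Z,W)=(\overline{R}(X,Y)Z,W)-\tfrac12(T(X,Y),T(Z,W))$. The sectional curvature for non-collinear $u,v\in D(p)$ is $K_{uv}=(K(u,v)v,u)/(\|u\|^2\|v\|^2-(u,v)^2)$;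 the Ricci curvature in direction of a unit $w\in D(p)$ is $\sum_i K_{w e_i}$ over an orthonormal basis $e_i$ of $w^\perp\cap D(p)$, and the scalar curvature is the sum of the Ricci curvatures over an orthonormal basis of $D(p)$. *)

From mathcomp Require Import all_boot all_order all_algebra.
From mathcomp Require Import reals.
Set Implicit Arguments. Unset Strict Implicit. Unset Printing Implicit Defensive.
Import Order.TTheory GRing.Theory Num.Theory.
Local Open Scope ring_scope.

(* Everything is left-invariant, so we work on the Lie algebra g = T_e G,
   modelled as 'rV[R]_n with Lie bracket [br]. Subspaces of g (D(e), D^perp(e))
   are row spaces of square matrices (mxalgebra). *)
Section SubRiemannianLie.
Variables (R : realType) (n : nat).
Local Notation vec := 'rV[R]_n.

Definition lie_bracket (br : vec -> vec -> vec) : Prop :=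
  [/\ forall a x y z, br (a *: x + y) z = a *: br x z + br y z,
      forall x y, br x y = - br y x &
      forall x y z, br x (br y z) + br y (br z x) + br z (br x y) = 0].

(* D(e) Lie-generates g : the only subalgebra containing D(e) is g itself
   (equivalent to D being completely nonholonomic for left-invariant D). *)
Definition lie_generating (br : vec -> vec -> vec) (D : 'M[R]_n) : Prop :=
  forall W : 'M[R]_n, (D <= W)%MS ->
    (forall x y, (x <= W)%MS -> (y <= W)%MS -> (br x y <= W)%MS) ->
    (W == 1%:M)%MS.

(* left-invariant Riemannian metric given by its Gram matrix S at e *)
Definition ip (S : 'M[R]_n) (x y : vec) : R := (x *m S *m y^T) 0 0.

Definition metric_matrix (S : 'M[R]_n) : Prop :=
  S^T = S /\ forall x : vec, x != 0 -> 0 < ip S x x.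

(* nabla X Y = Levi-Civita derivative nabla_X Y of left-invariant fields:
   torsion free and metric (X (Y,Z) = 0 for left-invariant fields) *)
Definition levi_civita (br : vec -> vec -> vec) (S : 'M[R]_n)
  (nabla : vec -> vec -> vec) : Prop :=
  (forall X Y, nabla X Y - nabla Y X = br X Y) /\
  (forall X Y Z, ip S (nabla X Y) Z + ip S Y (nabla X Z) = 0).

Variables (br : vec -> vec -> vec) (S : 'M[R]_n) (nabla : vec -> vec -> vec)
          (D Vs : 'M[R]_n).

Definition Hp (x : vec) : vec := x *m proj_mx D Vs.
Definition Vp (x : vec) : vec := x *m proj_mx Vs D.

Definition nablab (X Y : vec) : vec :=
  Hp (nabla X (Hp Y)) + Vp (nabla X (Vp Y)).

Definition torsion (X Y : vec) : vec := nablab X Y - nablab Y X - br X Y.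

Definition Rbar (X Y Z : vec) : vec :=
  nablab X (nablab Y Z) - nablab Y (nablab X Z) - nablab (br X Y) Z.

Definition Kcurv (X Y Z W : vec) : R :=
  ip S (Rbar X Y Z) W - 2^-1 * ip S (torsion X Y) (torsion Z W).

Definition sectional (u v : vec) : R :=
  Kcurv u v v u / (ip S u u * ip S v v - ip S u v ^+ 2).

Definition noncollinear (u v : vec) : Prop :=
  forall a b : R, a *: u + b *: v = 0 -> a = 0 /\ b = 0.

Definition inD (x : vec) : bool := (x <= D)%MS.

Definition perpD (w : vec) (x : vec) : bool := inD x && (ip S w x == 0).

Definition orthonormal_basis (W : pred vec) (k : nat) (e : 'I_k -> vec) : Prop :=
  [/\ forall i, W (e i),
      forall i j, ip S (e i) (e j) = (i == j)%:R &
      forall x, W x -> exists c : 'I_k -> R, x = \sum_(i < k) c i *: e i].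

(* Ricci curvature in direction w computed with the orthonormal basis e
   of w^perp \cap D *)
Definition ricci_with (w : vec) (k : nat) (e : 'I_k -> vec) : R :=
  \sum_(i < k) sectional w (e i).

End SubRiemannianLie.

From mathcomp Require Import all_boot all_order all_algebra.
From mathcomp Require Import reals.
From mathcomp Require Import lra.
Set Implicit Arguments. Unset Strict Implicit. Unset Printing Implicit Defensive.
Import Order.TTheory GRing.Theory Num.Theory.
Local Open Scope ring_scope.

(* Since all brackets lie in D^perp, which is orthogonal to D, the Koszul
   formula gives (nabla_X Y, Z) = 0 for X, Y, Z in D: the connection
   nablab vanishes on D x D, and the torsion on D is T(u,v) = -[u,v].
   Then (K(u,v)v, u) = -(nabla_[u,v] v, u) + |[u,v]|^2 / 2, and the Koszul
   formula once more gives (nabla_[u,v] v, u) = |[u,v]|^2 / 2. *)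

Section InnerProduct.
Variables (R : realType) (n : nat) (S : 'M[R]_n).

Lemma ipDl x y z : ip S (x + y) z = ip S x z + ip S y z.
Proof. by rewrite /ip !mulmxDl mxE. Qed.

Lemma ipNl x z : ip S (- x) z = - ip S x z.
Proof. by rewrite /ip !mulNmx mxE. Qed.

Lemma ip0l z : ip S 0 z = 0.
Proof. by rewrite /ip !mul0mx mxE. Qed.

Lemma ipC x y : S^T = S -> ip S x y = ip S y x.
Proof.
move=> S_sym; rewrite /ip -[in LHS](trmxK (x *m S *m y^T)) [in LHS]mxE.
by rewrite !trmx_mul trmxK S_sym mulmxA.
Qed.

Lemma ipxx_eq0 x : metric_matrix S -> ip S x x = 0 -> x = 0.
Proof.
by move=> [_ S_pos] xx0; case: (eqVneq x 0) => // /S_pos; rewrite xx0 ltxx.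
Qed.

End InnerProduct.

Section LeviCivita.
Variables (R : realType) (n : nat) (br : 'rV[R]_n -> 'rV[R]_n -> 'rV[R]_n).
Variables (S : 'M[R]_n) (nabla : 'rV[R]_n -> 'rV[R]_n -> 'rV[R]_n).
Hypotheses (brN : forall x y, br x y = - br y x) (lc : levi_civita br S nabla).

Lemma koszul X Y Z : S^T = S ->
  2 * ip S (nabla X Y) Z =
  ip S (br X Y) Z - ip S (br X Z) Y - ip S (br Y Z) X.
Proof.
move=> S_sym; case: lc => torsion_free metric.
have tor A B C : ip S (nabla A B) C = ip S (nabla B A) C + ip S (br A B) C.
  by rewrite -ipDl -torsion_free addrC subrK.
have met A B C : ip S (nabla A B) C = - ip S (nabla A C) B.
  by apply/eqP; rewrite -addr_eq0 (ipC _ B) // metric.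
have := tor X Y Z; have := met Y X Z; have := tor Y Z X.
have := met Z Y X; have := tor Z X Y; have := met X Z Y.
rewrite (brN Z X) ipNl; lra.
Qed.

Lemma nablax0 X : metric_matrix S -> nabla X 0 = 0.
Proof.
move=> S_metric; apply: (ipxx_eq0 S_metric).
by have := lc.2 X 0 (nabla X 0); rewrite ip0l addr0.
Qed.

End LeviCivita.

Section OrthogonalRigging.
Variables (R : realType) (n : nat) (br : 'rV[R]_n -> 'rV[R]_n -> 'rV[R]_n).
Variables (S D Vs : 'M[R]_n) (nabla : 'rV[R]_n -> 'rV[R]_n -> 'rV[R]_n).
Hypotheses (brN : forall x y, br x y = - br y x) (S_metric : metric_matrix S).
Hypothesis lc : levi_civita br S nabla.
Hypotheses (DVs_cap : (D :&: Vs = 0)%MS) (DVs_sum : (D + Vs == 1%:M)%MS).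
Hypothesis DVs_orth : forall x y, (x <= D)%MS -> (y <= Vs)%MS -> ip S x y = 0.
Hypothesis br_Vs : forall x y, (br x y <= Vs)%MS.

Let S_sym : S^T = S := S_metric.1.

Lemma VsD_orth x y : (y <= Vs)%MS -> (x <= D)%MS -> ip S y x = 0.
Proof. by move=> yVs xD; rewrite ipC // DVs_orth. Qed.

Lemma Hp_id x : (x <= D)%MS -> Hp D Vs x = x.
Proof. exact: proj_mx_id. Qed.

Lemma Vp_D x : (x <= D)%MS -> Vp D Vs x = 0.
Proof. by move=> xD; rewrite /Vp proj_mx_0 // capmxC. Qed.

Lemma ip_Hpl x d : (d <= D)%MS -> ip S (Hp D Vs x) d = ip S x d.
Proof.
move=> dD; have x_sum : (x <= D + Vs)%MS.
  by apply: submx_trans (submx1 x) _; case/andP: DVs_sum.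
rewrite -{2}(add_proj_mx DVs_cap x_sum) ipDl.
by rewrite (VsD_orth (proj_mx_sub Vs D x) dD) addr0.
Qed.

Lemma Hp_eq0 x : (forall d, (d <= D)%MS -> ip S x d = 0) -> Hp D Vs x = 0.
Proof.
move=> x_perp; apply: (ipxx_eq0 S_metric).
by rewrite ip_Hpl ?x_perp ?proj_mx_sub.
Qed.

Lemma Hp_nablaDD Y Z : (Y <= D)%MS -> (Z <= D)%MS -> Hp D Vs (nabla Y Z) = 0.
Proof.
move=> YD ZD; apply: Hp_eq0 => d dD; apply/eqP.
have := koszul brN lc Y Z d S_sym.
rewrite !(VsD_orth (br_Vs _ _)) // !subr0 => /eqP.
by rewrite mulf_eq0 pnatr_eq0.
Qed.

Lemma nablab0 Y : nablab nabla D Vs Y 0 = 0.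
Proof. by rewrite /nablab /Hp /Vp !mul0mx (nablax0 lc) // !mul0mx addr0. Qed.

Lemma nablabDD Y Z : (Y <= D)%MS -> (Z <= D)%MS -> nablab nabla D Vs Y Z = 0.
Proof.
move=> YD ZD.
by rewrite /nablab (Hp_id ZD) (Vp_D ZD) (nablax0 lc) // /Vp mul0mx Hp_nablaDD ?addr0.
Qed.

Lemma ip_nabla_br u v : (u <= D)%MS -> (v <= D)%MS ->
  2 * ip S (nabla (br u v) v) u = ip S (br u v) (br u v).
Proof.
move=> uD vD; rewrite (koszul brN lc) // (VsD_orth (br_Vs _ _) uD).
by rewrite (VsD_orth (br_Vs _ _) vD) (brN v u) ipNl subrr sub0r opprK.
Qed.

Lemma Kcurv_DD u v : (u <= D)%MS -> (v <= D)%MS ->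
  Kcurv br S nabla D Vs u v v u = 0.
Proof.
move=> uD vD; have := ip_nabla_br uD vD.
rewrite /Kcurv /torsion /Rbar (nablabDD vD vD) (nablabDD uD vD) (nablabDD vD uD).
rewrite !nablab0 /nablab (Vp_D vD) (nablax0 lc) // /Vp mul0mx addr0 (Hp_id vD).
rewrite !subrr !sub0r (brN v u) opprK !ipNl (ip_Hpl _ uD); lra.
Qed.

Lemma sectional_DD u v : (u <= D)%MS -> (v <= D)%MS ->
  sectional br S nabla D Vs u v = 0.
Proof. by move=> uD vD; rewrite /sectional Kcurv_DD ?mul0r. Qed.

Lemma ricci_with_D w k (e : 'I_k -> 'rV[R]_n) :
  (w <= D)%MS -> (forall i, (e i <= D)%MS) -> ricci_with br S nabla D Vs w e = 0.
Proof.
by move=> wD eD; rewrite /ricci_with big1 // => i _; apply: sectional_DD.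
Qed.

Lemma orthonormal_basis_perpD w k (e : 'I_k -> 'rV[R]_n) :
  orthonormal_basis S (perpD S D w) e -> forall i, (e i <= D)%MS.
Proof. by case=> e_perp _ _ i; case/andP: (e_perp i). Qed.

End OrthogonalRigging.

Theorem proposition3 (R : realType) (n m : nat)
  (br : 'rV[R]_n -> 'rV[R]_n -> 'rV[R]_n) (D Vs S : 'M[R]_n)
  (nabla : 'rV[R]_n -> 'rV[R]_n -> 'rV[R]_n) :
  (2 <= m)%N -> (m < n)%N ->
  lie_bracket br ->
  \rank D = m ->
  lie_generating br D ->
  \rank (D :&: Vs)%MS = 0%N -> (D + Vs == 1%:M)%MS ->
  (forall x y, (br x y <= Vs)%MS) ->
  metric_matrix S ->
  (forall x y, (x <= D)%MS -> (y <= Vs)%MS -> ip S x y = 0) ->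
  levi_civita br S nabla ->
  [/\ (* sectional curvatures *)
      forall u v, (u <= D)%MS -> (v <= D)%MS -> noncollinear u v ->
        sectional br S nabla D Vs u v = 0,
      (* Ricci curvatures *)
      forall w, (w <= D)%MS -> ip S w w = 1 ->
        forall k (e : 'I_k -> 'rV[R]_n),
          orthonormal_basis S (perpD S D w) e ->
          ricci_with br S nabla D Vs w e = 0 &
      (* scalar curvature *)
      forall k (f : 'I_k -> 'rV[R]_n), orthonormal_basis S (inD D) f ->
        forall (kk : 'I_k -> nat) (E : forall i : 'I_k, 'I_(kk i) -> 'rV[R]_n),
          (forall i, orthonormal_basis S (perpD S D (f i)) (E i)) ->
          \sum_(i < k) ricci_with br S nabla D Vs (f i) (E i) = 0].
Proof.
move=> _ _ [_ brN _] _ _ cap0 DVs_sum br_Vs S_metric DVs_orth lc.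
have DVs_cap : (D :&: Vs = 0)%MS by apply/eqP; rewrite -mxrank_eq0 cap0.
have ricci0 := ricci_with_D brN S_metric lc DVs_cap DVs_sum DVs_orth br_Vs.
split.
- by move=> u v uD vD _; exact: sectional_DD.
- by move=> w wD _ k e /orthonormal_basis_perpD; exact: ricci0.
- move=> k f [fD _ _] kk E E_basis; rewrite big1 // => i _.
  exact: ricci0 (fD i) (orthonormal_basis_perpD (E_basis i)).
Qed.
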